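(* Let $N\ge 2$ and $d\ge 1$. Let $L^{\sharp}(\mathbf q^{(0)},\dots,\mathbf q^{(N-1)},t)$ be an $(N-1)$-th order Lagrangian (possibly singular, possibly explicitly time dependent) in the coordinates $q^i$, $i=1,\dots,d$. Suppose its Ostrogradski canonical theory has only first-class constraints $\gamma^{\sharp}_a(\mathbf q_\sharp,\mathbf p^\sharp,t)\approx 0$ (primary and secondary), and canonical Hamiltonian $H^{\sharp}(\mathbf q_\sharp,\mathbf p^\sharp,t)$. Assume $H^\sharp$ and all $\gamma^\sharp_a$ are polynomials in the momenta $p^\sharp_{Ai}$, quantized with a fixed operator ordering. Let $W(\mathbf q^{(0)},\dots,\mathbf q^{(N-1)},t)$ be an arbitrary smooth function, and put $$L:=L^\sharp+\frac{dW}{dt},$$ an $N$-th order Lagrangian. Treat $L$ by the extended Ostrogradski formalism described in the context. Its quantum mechanics is then given by three conditions on wave functions $\psi(\mathbf q,t)$, where $\mathbf q=(q^{Ii})_{I=0,\dots,N-1}$: $$i\hbar\,\partial_t\psi=\Big[\hat H^\sharp\Big(\mathbf q_\sharp,\,-i\hbar\tfrac{\partial}{\partial \mathbf q_\sharp}-\tfrac{\partial W}{\partial \mathbf q_\sharp},\,t\Big)-\tfrac{\partial W}{\partial t}\Big]\psi,$$ $$\Big(-i\hbar\tfrac{\partial}{\partial q^{N-1,i}}-\tfrac{\partial W}{\partial q^{N-1,i}}\Big)\psi=0\quad (i=1,\dots,d),$$ $$\hat\gamma^\sharp_a\Big(\mathbf q_\sharp,\,-i\hbar\tfrac{\partial}{\partial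 \mathbf q_\sharp}-\tfrac{\partial W}{\partial \mathbf q_\sharp},\,t\Big)\psi=0\quad\text{for all }a .$$ The quantum mechanics of $L^\sharp$ is given by two conditions on wave functions $\psi^\sharp(\mathbf q_\sharp,t)$: $$i\hbar\,\partial_t\psi^\sharp=\hat H^\sharp\Big(\mathbf q_\sharp,-i\hbar\tfrac{\partial}{\partial\mathbf q_\sharp},t\Big)\psi^\sharp,\qquad \hat\gamma^\sharp_a\Big(\mathbf q_\sharp,-i\hbar\tfrac{\partial}{\partial\mathbf q_\sharp},t\Big)\psi^\sharp=0 .$$ Then a function $\psi(\mathbf q,t)$ satisfies the three conditions for $L$ if and only if $$\psi(\mathbf q,t)=\psi^\sharp(\mathbf q_\sharp,t)\exp\!\big(iW(\mathbf q,t)/\hbar\big)$$ for a function $\psi^\sharp$ satisfying the two conditions for $L^\sharp$. Thus the $N$-th order Lagrangian $L$ and the $(N-1)$-th order Lagrangian $L^\sharp$ lead to the same quantum mechanics.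
   Context: Ostrogradski formalism: for an $N$-th order Lagrangian $L(\mathbf q^{(0)},\dots,\mathbf q^{(N)},t)$ with $q^{(I)i}=d^Iq^i/dt^I$, the canonical variables are $q^{Ii}:=q^{(I)i}$ and $p_{Ii}:=\sum_{K=I+1}^{N}(-d/dt)^{K-I-1}\partial L/\partial q^{(K)i}$, for $I=0,\dots,N-1$. The Poisson bracket is $\{F,G\}=\sum_{I,i}\big(\partial_{q^{Ii}}F\,\partial_{p_{Ii}}G-\partial_{p_{Ii}}F\,\partial_{q^{Ii}}G\big)$. Quantization (Dirac): when all constraints are first class, one uses the Schrödinger picture with $\hat q^{Ii}=q^{Ii}$ and $\hat p_{Ii}=-i\hbar\,\partial/\partial q^{Ii}$. The wave function obeys $i\hbar\partial_t\psi=\hat H\psi$ with $H$ the canonical Hamiltonian, and satisfies $\hat\gamma\psi=0$ for every first-class constraint $\gamma$. Notation: indices $A,B$ run over $0,\dots,N-2$; $\mathbf q_\sharp=(q^{Ai})$ and $\mathbf p^\sharp=(p^\sharp_{Ai})$ are the Ostrogradski variables of $L^\sharp$. Repeated indices are summed. Extended formalism for $L$: the phase space has coordinates $q^{Ii},p_{Ii}$, $I=0,\dots,N-1$. Define the shifted momenta $p^\sharp_{Ai}:=p_{Ai}-\partial W/\partial q^{Ai}$. The canonical Hamiltonian is $H(\mathbf q,\mathbf p,t)=H^\sharp(\mathbf q_\sharp,\mathbf p^\sharp,t)-\partial W/\partial t$. The constraints are $\gamma_i:=p_{N-1,i}-\partial W/\partial q^{N-1,i}\approx 0$ together with the $\gamma^\sharp_a(\mathbf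 q_\sharp,\mathbf p^\sharp,t)\approx0$, all of which are first class. *)

From Stdlib Require Import Reals List.
From Coquelicot Require Import Coquelicot.
From mathcomp Require Import ssreflect ssrbool eqtype ssrnat fintype.

Set Implicit Arguments.
Unset Strict Implicit.

Open Scope R_scope.

(* Configuration space: coordinates q^{I i}, I : 'I_n (derivative order), i : 'I_d. *)
Definition Cfg (n d : nat) : Type := 'I_n -> 'I_d -> R.

Definition upd (n d : nat) (q : Cfg n d) (I : 'I_n) (i : 'I_d) (s : R) : Cfg n d :=
  fun J j => if (J == I) && (j == i) then s else q J j.

Definition CFun (n d : nat) : Type := Cfg n d -> R -> C.

Definition Cderiv (f : R -> C) (x : R) : C :=
  (Derive (fun s => fst (f s)) x, Derive (fun s => snd (f s)) x).
Definition Cex_derive (f : R -> C) (x : R) : Prop :=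
  ex_derive (fun s => fst (f s)) x /\ ex_derive (fun s => snd (f s)) x.

Definition dq (n d : nat) (F : CFun n d) (I : 'I_n) (i : 'I_d) : CFun n d :=
  fun q t => Cderiv (fun s => F (upd q I i s) t) (q I i).
Definition dt (n d : nat) (F : CFun n d) : CFun n d :=
  fun q t => Cderiv (fun s => F q s) t.

Definition dqR (n d : nat) (W : Cfg n d -> R -> R) (I : 'I_n) (i : 'I_d)
  : Cfg n d -> R -> R :=
  fun q t => Derive (fun s => W (upd q I i s) t) (q I i).
Definition dtR (n d : nat) (W : Cfg n d -> R -> R) : Cfg n d -> R -> R :=
  fun q t => Derive (fun s => W q s) t.

(* Smoothness: all iterated partial derivatives (in q^{I i} and t) exist everywhere.
   A direction is None (time) or Some (I,i). *)
Definition dir (n d : nat) : Type := option ('I_n * 'I_d).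

Definition dir_deriv (n d : nat) (F : CFun n d) (e : dir n d) : CFun n d :=
  match e with
  | None => dt F
  | Some (J, i) => dq F J i
  end.

Definition dir_ex (n d : nat) (F : CFun n d) (e : dir n d) (q : Cfg n d) (t : R) : Prop :=
  match e with
  | None => Cex_derive (fun s => F q s) t
  | Some (J, i) => Cex_derive (fun s => F (upd q J i s) t) (q J i)
  end.

Definition smoothC (n d : nat) (F : CFun n d) : Prop :=
  forall (ds : list (dir n d)) (e : dir n d) (q : Cfg n d) (t : R),
    dir_ex (fold_right (fun e' G => dir_deriv G e') F ds) e q t.

Definition smoothR (n d : nat) (W : Cfg n d -> R -> R) : Prop :=
  smoothC (fun q t => RtoC (W q t)).

Definition expi (theta : R) : C := (cos theta, sin theta).

(* Quantized operators that are polynomial in the momenta p_{A i} with a fixed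
   operator ordering: a finite sum of ordered words, each word a product of
   factors which are either multiplication by a coefficient function f(q_#,t)
   or a momentum operator p_{A i}.  The leftmost factor acts last. *)
Inductive factor (n d : nat) : Type :=
  | Mul of CFun n d
  | Mom of 'I_n & 'I_d.
Arguments Mul {n d} _.
Arguments Mom {n d} _ _.

Definition word (n d : nat) := list (factor n d).
Definition oper (n d : nat) := list (word n d).

Definition op_smooth (n d : nat) (H : oper n d) : Prop :=
  forall w, In w H -> forall f, In (Mul f) w -> smoothC f.

Fixpoint apply_word (n d : nat) (X : Type)
  (lift : CFun n d -> X -> R -> C)
  (P : 'I_n -> 'I_d -> (X -> R -> C) -> (X -> R -> C))
  (w : word n d) (psi : X -> R -> C) : X -> R -> C :=
  match w with
  | nil => psi
  | Mul f :: w' => fun x t => Cmult (lift f x t) (apply_word lift P w' psi x t)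
  | Mom A i :: w' => P A i (apply_word lift P w' psi)
  end.

Definition apply_op (n d : nat) (X : Type)
  (lift : CFun n d -> X -> R -> C)
  (P : 'I_n -> 'I_d -> (X -> R -> C) -> (X -> R -> C))
  (H : oper n d) (psi : X -> R -> C) : X -> R -> C :=
  fun x t => fold_right (fun w acc => Cplus (apply_word lift P w psi x t) acc)
                        (RtoC 0) H.

(* ---- The N-th order theory, N = M.+1: full coordinates Cfg M.+1 d,
        sharp coordinates q_# = (q^{A i})_{A < M} : Cfg M d. ---- *)

Definition wid (M : nat) (A : 'I_M) : 'I_M.+1 := widen_ord (leqnSn M) A.

Definition sharp (M d : nat) (q : Cfg M.+1 d) : Cfg M d := fun A i => q (wid A) i.

Definition lift_sharp (M d : nat) (f : CFun M d) : CFun M.+1 d :=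
  fun q t => f (sharp q) t.

Definition p_std (hbar : R) {M d : nat} (A : 'I_M) (i : 'I_d) (phi : CFun M d)
  : CFun M d :=
  fun q t => Cmult (Copp (Cmult Ci (RtoC hbar))) (dq phi A i q t).

Definition p_shift (hbar : R) {M d : nat} (W : Cfg M.+1 d -> R -> R)
  (A : 'I_M) (i : 'I_d) (psi : CFun M.+1 d) : CFun M.+1 d :=
  fun q t => Cminus (Cmult (Copp (Cmult Ci (RtoC hbar))) (dq psi (wid A) i q t))
                    (Cmult (RtoC (dqR W (wid A) i q t)) (psi q t)).

Definition QM_L (hbar : R) (M d : nat) (K : Type) (Hs : oper M d)
  (gam : K -> oper M d) (W : Cfg M.+1 d -> R -> R) (psi : CFun M.+1 d) : Prop :=
  (forall q t,
     Cmult (Cmult Ci (RtoC hbar)) (dt psi q t) =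
     Cminus (apply_op (@lift_sharp M d) (p_shift hbar W) Hs psi q t)
            (Cmult (RtoC (dtR W q t)) (psi q t)))
  /\ (forall (i : 'I_d) q t,
     Cminus (Cmult (Copp (Cmult Ci (RtoC hbar))) (dq psi ord_max i q t))
            (Cmult (RtoC (dqR W ord_max i q t)) (psi q t)) = RtoC 0)
  /\ (forall (a : K) q t,
     apply_op (@lift_sharp M d) (p_shift hbar W) (gam a) psi q t = RtoC 0).

Definition QM_sharp (hbar : R) (M d : nat) (K : Type) (Hs : oper M d)
  (gam : K -> oper M d) (psis : CFun M d) : Prop :=
  (forall q t,
     Cmult (Cmult Ci (RtoC hbar)) (dt psis q t) =
     apply_op (fun f => f) (p_std hbar) Hs psis q t)
  /\ (forall (a : K) q t,
     apply_op (fun f => f) (p_std hbar) (gam a) psis q t = RtoC 0).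

(** The shifted momenta of [L] are the standard momenta of [L^#] conjugated by the
    phase [e^{iW/hbar}]: [(-i hbar d/dq - dW/dq) (f e^{iW/hbar}) = (-i hbar df/dq) e^{iW/hbar}],
    and likewise [i hbar d/dt + dW/dt] is conjugate to [i hbar d/dt].  Hence an operator
    polynomial in the shifted momenta, applied to [psi^#(q_#) e^{iW/hbar}], is the
    corresponding operator of [L^#] applied to [psi^#], times the phase, and the three
    conditions for [psi^# e^{iW/hbar}] reduce to the two conditions for [psi^#] (the
    constraint on the last row holds identically).  Conversely, the constraint
    [(-i hbar d/dq^{N-1} - dW/dq^{N-1}) psi = 0] says that [psi e^{-iW/hbar}] has vanishing
    derivatives in the last-row coordinates, so by the mean value theorem it only depends
    on [q_#]. *)

From Stdlib Require Import Reals List FunctionalExtensionality Lra.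
From Coquelicot Require Import Coquelicot.
From mathcomp Require Import ssreflect ssrfun ssrbool eqtype ssrnat fintype.

Set Implicit Arguments.
Open Scope R_scope.

Lemma is_derive_eq (f : R -> R) x l l' : is_derive f x l -> l = l' -> is_derive f x l'.
Proof. by move=> H <-. Qed.

Definition is_Cderive (f : R -> C) (x : R) (l : C) : Prop :=
  is_derive (fun s => fst (f s)) x (fst l) /\ is_derive (fun s => snd (f s)) x (snd l).

Section ComplexDerivative.
Implicit Types (f g : R -> C) (x : R) (l a b : C).

Lemma is_Cderive_ex f x l : is_Cderive f x l -> Cex_derive f x.
Proof. by case=> H1 H2; split; eexists; eassumption. Qed.

Lemma is_Cderive_unique f x l : is_Cderive f x l -> Cderiv f x = l.
Proof.
case=> H1 H2; rewrite /Cderiv (is_derive_unique _ _ _ H1) (is_derive_unique _ _ _ H2).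
by case: l {H1 H2}.
Qed.

Lemma Cderiv_correct f x : Cex_derive f x -> is_Cderive f x (Cderiv f x).
Proof. by case=> H1 H2; split; apply: Derive_correct. Qed.

Lemma is_Cderive_ext f g x l : (forall s, f s = g s) -> is_Cderive f x l -> is_Cderive g x l.
Proof.
by move=> E [H1 H2]; split; [apply: is_derive_ext H1 | apply: is_derive_ext H2] => s; rewrite E.
Qed.

Lemma is_Cderive_const (c : C) x : is_Cderive (fun _ => c) x (RtoC 0).
Proof. by split; apply: is_derive_const. Qed.

Lemma is_Cderive_plus f g x a b : is_Cderive f x a -> is_Cderive g x b ->
  is_Cderive (fun s => Cplus (f s) (g s)) x (Cplus a b).
Proof. by case=> Ha1 Ha2 [Hb1 Hb2]; split; apply: is_derive_plus. Qed.

Lemma is_Cderive_mult f g x a b : is_Cderive f x a -> is_Cderive g x b ->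
  is_Cderive (fun s => Cmult (f s) (g s)) x (Cplus (Cmult a (g x)) (Cmult (f x) b)).
Proof.
have mult_rule u v du dv : is_derive u x du -> is_derive v x dv ->
    is_derive (fun s => u s * v s) x (du * v x + u x * dv).
  by move=> Hu Hv; apply: (is_derive_mult u v x du dv Hu Hv) => ? ?; apply: Rmult_comm.
case=> Ha1 Ha2 [Hb1 Hb2]; split; rewrite /Cmult /Cplus /=.
- refine (is_derive_eq (is_derive_minus _ _ _ _ _
    (mult_rule _ _ _ _ Ha1 Hb1) (mult_rule _ _ _ _ Ha2 Hb2)) _).
  rewrite /minus /plus /opp /=; ring.
- refine (is_derive_eq (is_derive_plus _ _ _ _ _
    (mult_rule _ _ _ _ Ha1 Hb2) (mult_rule _ _ _ _ Ha2 Hb1)) _).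
  rewrite /plus /=; ring.
Qed.

Lemma is_Cderive_expi (w : R -> R) x (a c : R) : c <> 0 -> is_derive w x a ->
  is_Cderive (fun s => expi (w s / c)) x
    (Cmult (Cmult Ci (RtoC (a / c))) (expi (w x / c))).
Proof.
move=> Hc Hw.
have Hwc : is_derive (fun s => w s / c) x (a / c)
  := is_derive_eq (is_derive_scal_l _ _ _ (/ c) Hw) erefl.
split; simpl.
- refine (is_derive_eq (is_derive_comp _ _ _ _ _ (is_derive_cos _) Hwc) _).
  rewrite /scal /= /mult /=; ring.
- refine (is_derive_eq (is_derive_comp _ _ _ _ _ (is_derive_sin _) Hwc) _).
  rewrite /scal /= /mult /=; ring.
Qed.

Lemma is_Cderive_0_const f : (forall s, is_Cderive f s (RtoC 0)) -> forall r s : R, f r = f s.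
Proof.
move=> H.
have lt_const r s : r < s -> f r = f s.
  move=> Hrs; apply: injective_projections.
  - by apply: (eq_is_derive (fun y => fst (f y))) => // y _; case: (H y).
  - by apply: (eq_is_derive (fun y => snd (f y))) => // y _; case: (H y).
move=> r s; case: (Rtotal_order r s) => [|[-> //|]]; first exact: lt_const.
by move/lt_const.
Qed.

End ComplexDerivative.

Section Directional.
Variables (n d : nat).
Implicit Types (F G : CFun n d) (e : dir n d) (q : Cfg n d) (t : R).

Definition dir_fun F e q t : R -> C :=
  match e with None => fun s => F q s | Some (J, i) => fun s => F (upd q J i s) t end.

Definition dir_pt e q t : R := match e with None => t | Some (J, i) => q J i end.

Lemma upd_id q J i : upd q J i (q J i) = q.
Proof.
apply: functional_extensionality => K; apply: functional_extensionality => j.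
by rewrite /upd; case: ifP => // /andP[/eqP -> /eqP ->].
Qed.

Lemma upd_upd q J i s s' : upd (upd q J i s) J i s' = upd q J i s'.
Proof.
apply: functional_extensionality => K; apply: functional_extensionality => j.
by rewrite /upd; case: ifP => // ->.
Qed.

Lemma upd_same q J i s : upd q J i s J i = s.
Proof. by rewrite /upd !eqxx. Qed.

Lemma dir_fun_pt F e q t : dir_fun F e q t (dir_pt e q t) = F q t.
Proof. by case: e => [[J i]|] //=; rewrite upd_id. Qed.

Lemma dir_exE F e q t : dir_ex F e q t = Cex_derive (dir_fun F e q t) (dir_pt e q t).
Proof. by case: e => [[J i]|]. Qed.

Lemma dir_derivE F e q t : dir_deriv F e q t = Cderiv (dir_fun F e q t) (dir_pt e q t).
Proof. by case: e => [[J i]|]. Qed.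

Lemma dir_ex_is_Cderive {F e q t} :
  dir_ex F e q t -> is_Cderive (dir_fun F e q t) (dir_pt e q t) (dir_deriv F e q t).
Proof. by rewrite dir_exE dir_derivE; apply: Cderiv_correct. Qed.

Lemma is_Cderive_dir_deriv {F e} {l : CFun n d} :
  (forall q t, is_Cderive (dir_fun F e q t) (dir_pt e q t) (l q t)) ->
  (forall q t, dir_ex F e q t) /\ dir_deriv F e = l.
Proof.
move=> Hl; split=> [q t|]; first by rewrite dir_exE; apply: is_Cderive_ex (Hl q t).
apply: functional_extensionality => q; apply: functional_extensionality => t.
by rewrite dir_derivE; apply: is_Cderive_unique.
Qed.

Lemma smoothC_deriv F e : smoothC F -> smoothC (dir_deriv F e).
Proof. by move=> HF ds; have := HF (ds ++ e :: nil); rewrite fold_right_app. Qed.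

Lemma smoothC_const (c : C) : smoothC (fun (_ : Cfg n d) (_ : R) => c).
Proof.
have const_deriv (c' : C) e : let F := fun (_ : Cfg n d) (_ : R) => c' in
    (forall q t, dir_ex F e q t) /\ dir_deriv F e = fun _ _ => RtoC 0.
  by apply: is_Cderive_dir_deriv => q t; case: e => [[J i]|]; apply: is_Cderive_const.
have iter_const ds : exists c' : C,
    fold_right (fun e' G => dir_deriv G e') (fun _ _ => c) ds = fun _ _ => c'.
  elim: ds => [|e ds [c' IH]] /=; first by exists c.
  by exists (RtoC 0); rewrite IH; case: (const_deriv c' e).
by move=> ds e q t; case: (iter_const ds) => c' ->; case: (const_deriv c' e).
Qed.

(* Smoothness of products does not follow by induction on the list of derivatives; it
   does for a ring of functions whose generators are differentiable and whose derivatives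
   stay in the ring. *)
Section RingClosure.
Variable S : CFun n d -> Prop.

Inductive ring_closure : CFun n d -> Prop :=
  | ring_closure_gen F : S F -> ring_closure F
  | ring_closure_plus F G : ring_closure F -> ring_closure G ->
      ring_closure (fun q t => Cplus (F q t) (G q t))
  | ring_closure_mult F G : ring_closure F -> ring_closure G ->
      ring_closure (fun q t => Cmult (F q t) (G q t)).

Hypothesis gen_ex : forall F, S F -> forall e q t, dir_ex F e q t.
Hypothesis gen_deriv : forall F, S F -> forall e, ring_closure (dir_deriv F e).

Lemma ring_closure_deriv F : ring_closure F ->
  (forall e q t, dir_ex F e q t) /\ (forall e, ring_closure (dir_deriv F e)).
Proof.
elim=> {F} [F SF | F G _ [exF dF] _ [exG dG] | F G cF [exF dF] cG [exG dG]].
- by split; [apply: gen_ex | apply: gen_deriv].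
- have sum_deriv e : let H := fun q t => Cplus (F q t) (G q t) in
      (forall q t, dir_ex H e q t) /\
      dir_deriv H e = fun q t => Cplus (dir_deriv F e q t) (dir_deriv G e q t).
    apply: is_Cderive_dir_deriv => q t.
    apply: is_Cderive_ext (is_Cderive_plus (dir_ex_is_Cderive (exF e q t))
                                           (dir_ex_is_Cderive (exG e q t))).
    by case: e => [[J i]|].
  split=> [e q t | e]; first by case: (sum_deriv e).
  by case: (sum_deriv e) => _ ->; apply: ring_closure_plus.
- have prod_deriv e : let H := fun q t => Cmult (F q t) (G q t) in
      (forall q t, dir_ex H e q t) /\
      dir_deriv H e = fun q t => Cplus (Cmult (dir_deriv F e q t) (G q t))
                                       (Cmult (F q t) (dir_deriv G e q t)).
    apply: is_Cderive_dir_deriv => q t.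
    have := is_Cderive_mult (dir_ex_is_Cderive (exF e q t)) (dir_ex_is_Cderive (exG e q t)).
    rewrite !dir_fun_pt; apply: is_Cderive_ext.
    by case: e => [[J i]|].
  split=> [e q t | e]; first by case: (prod_deriv e).
  case: (prod_deriv e) => _ ->.
  by apply: ring_closure_plus; apply: ring_closure_mult; [apply: dF | | | apply: dG].
Qed.

Lemma ring_closure_smooth F : ring_closure F -> smoothC F.
Proof.
move=> HF ds; suff: ring_closure (fold_right (fun e' G => dir_deriv G e') F ds).
  by case/ring_closure_deriv.
by elim: ds => //= e ds /ring_closure_deriv[_]; apply.
Qed.

End RingClosure.

Definition dir_funR (W : Cfg n d -> R -> R) e q t : R -> R :=
  match e with None => fun s => W q s | Some (J, i) => fun s => W (upd q J i s) t end.

Lemma dir_funR_pt W e q t : dir_funR W e q t (dir_pt e q t) = W q t.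
Proof. by case: e => [[J i]|] //=; rewrite upd_id. Qed.

Lemma dir_deriv_RtoC W e q t : dir_deriv (fun q t => RtoC (W q t)) e q t =
  RtoC (Derive (dir_funR W e q t) (dir_pt e q t)).
Proof. by case: e => [[J i]|]; rewrite /= /dq /dt /Cderiv /= Derive_const. Qed.

Lemma smoothR_is_derive W e q t : smoothR W ->
  is_derive (dir_funR W e q t) (dir_pt e q t) (Derive (dir_funR W e q t) (dir_pt e q t)).
Proof.
move=> HW; apply: Derive_correct.
have := HW nil e q t; rewrite /= dir_exE => -[H _].
by case: e H => [[J i]|].
Qed.

Lemma is_Cderive_dir_expi W c e q t : c <> 0 -> smoothR W ->
  is_Cderive (dir_fun (fun q t => expi (W q t / c)) e q t) (dir_pt e q t)
    (Cmult (Cmult Ci (RtoC (Derive (dir_funR W e q t) (dir_pt e q t) / c))) (expi (W q t / c))).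
Proof.
move=> Hc HW; have := is_Cderive_expi Hc (smoothR_is_derive e q t HW).
by rewrite dir_funR_pt; apply: is_Cderive_ext; case: e => [[J i]|].
Qed.

Lemma is_Cderive_phase {u : CFun n d} {W c e q t} : c <> 0 -> smoothR W -> dir_ex u e q t ->
  is_Cderive (dir_fun (fun q t => Cmult (u q t) (expi (W q t / c))) e q t) (dir_pt e q t)
    (Cmult (Cplus (dir_deriv u e q t)
                  (Cmult (u q t) (Cmult Ci (RtoC (Derive (dir_funR W e q t) (dir_pt e q t) / c)))))
           (expi (W q t / c))).
Proof.
move=> Hc HW Hu.
have := is_Cderive_mult (dir_ex_is_Cderive Hu) (is_Cderive_dir_expi e q t Hc HW).
rewrite !dir_fun_pt; set D := Cmult Ci _ => H.
have -> : Cmult (Cplus (dir_deriv u e q t) (Cmult (u q t) D)) (expi (W q t / c)) =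
  Cplus (Cmult (dir_deriv u e q t) (expi (W q t / c))) (Cmult (u q t) (Cmult D (expi (W q t / c)))).
  by ring.
by apply: is_Cderive_ext H; case: e {D Hu} => [[J i]|].
Qed.

Definition smooth_or_phase (F : CFun n d) : Prop :=
  smoothC F \/ exists W c, smoothR W /\ c <> 0 /\ F = fun q t => expi (W q t / c).

Lemma smooth_or_phase_ex F : smooth_or_phase F -> forall e q t, dir_ex F e q t.
Proof.
case=> [HF | [W [c [HW [Hc ->]]]]] e q t; first exact: (HF nil).
by rewrite dir_exE; apply: is_Cderive_ex (is_Cderive_dir_expi e q t Hc HW).
Qed.

Lemma smooth_or_phase_deriv F : smooth_or_phase F ->
  forall e, ring_closure smooth_or_phase (dir_deriv F e).
Proof.
case=> [HF | [W [c [HW [Hc ->]]]]] e.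
  by apply: ring_closure_gen; left; apply: smoothC_deriv.
have -> : dir_deriv (fun q t => expi (W q t / c)) e = fun q t =>
    Cmult (Cmult (Cmult Ci (RtoC (/ c))) (dir_deriv (fun q t => RtoC (W q t)) e q t))
          (expi (W q t / c)).
  case: (is_Cderive_dir_deriv (fun q t => is_Cderive_dir_expi e q t Hc HW)) => _ ->.
  apply: functional_extensionality => q; apply: functional_extensionality => t.
  by rewrite dir_deriv_RtoC /Rdiv RtoC_mult; ring.
apply: ring_closure_mult; first apply: ring_closure_mult.
all: apply: ring_closure_gen.
- by left; apply: smoothC_const.
- by left; apply: smoothC_deriv.
- by right; exists W, c.
Qed.

Lemma smooth_or_phase_smooth F : ring_closure smooth_or_phase F -> smoothC F.
Proof. exact: (ring_closure_smooth smooth_or_phase_ex smooth_or_phase_deriv). Qed.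

Lemma smoothC_mult F G : smoothC F -> smoothC G -> smoothC (fun q t => Cmult (F q t) (G q t)).
Proof. by move=> HF HG; apply: smooth_or_phase_smooth; apply: ring_closure_mult;
  apply: ring_closure_gen; left. Qed.

Lemma smoothC_expi W c : smoothR W -> c <> 0 -> smoothC (fun q t => expi (W q t / c)).
Proof.
by move=> HW Hc; apply: smooth_or_phase_smooth; apply: ring_closure_gen; right; exists W, c.
Qed.

End Directional.

Section Coordinates.
Variables (M d : nat).
Implicit Types (q : Cfg M.+1 d) (qs : Cfg M d) (A : 'I_M) (i : 'I_d) (s : R).

Definition pad qs : Cfg M.+1 d :=
  fun J j => if (insub (nat_of_ord J) : option 'I_M) is Some A then qs A j else 0.

Lemma wid_eq A B : (wid B == wid A) = (B == A).
Proof. by rewrite -val_eqE -[B == A]val_eqE. Qed.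

Lemma wid_eq_max A : (wid A == ord_max) = false.
Proof. by apply/negbTE; rewrite -val_eqE /= neq_ltn ltn_ord. Qed.

Lemma sharp_upd_wid q A i s : sharp (upd q (wid A) i s) = upd (sharp q) A i s.
Proof.
apply: functional_extensionality => B; apply: functional_extensionality => j.
by rewrite /sharp /upd wid_eq.
Qed.

Lemma sharp_upd_max q i s : sharp (upd q ord_max i s) = sharp q.
Proof.
apply: functional_extensionality => B; apply: functional_extensionality => j.
by rewrite /sharp /upd wid_eq_max.
Qed.

Lemma sharp_pad qs : sharp (pad qs) = qs.
Proof.
apply: functional_extensionality => B; apply: functional_extensionality => j.
by rewrite /sharp /pad valK.
Qed.

Lemma pad_upd qs A i s : pad (upd qs A i s) = upd (pad qs) (wid A) i s.
Proof.
apply: functional_extensionality => J; apply: functional_extensionality => j.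
rewrite /pad /upd; case: insubP => [B _ HB | HJ].
  by have -> : J = wid B by apply: val_inj; rewrite /= HB.
suff /negbTE -> : J != wid A by [].
by apply: contraNneq HJ => ->; rewrite /= ltn_ord.
Qed.

(* Interpolates, one coordinate at a time, between [q] ([k = 0]) and [pad (sharp q)]
   ([k = d]). *)
Definition zero_last_row (k : nat) q : Cfg M.+1 d :=
  fun J j => if (J == ord_max) && (j < k)%N then 0 else q J j.

Lemma zero_last_row0 q : zero_last_row 0 q = q.
Proof.
apply: functional_extensionality => J; apply: functional_extensionality => j.
by rewrite /zero_last_row ltn0 andbF.
Qed.

Lemma zero_last_rowS k q (Hk : (k < d)%N) :
  zero_last_row k.+1 q = upd (zero_last_row k q) ord_max (Ordinal Hk) 0.
Proof.
apply: functional_extensionality => J; apply: functional_extensionality => j.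
rewrite /zero_last_row /upd ltnS leq_eqVlt -[j == _]val_eqE /=.
by case: (J == ord_max); case: (_ == k).
Qed.

Lemma zero_last_row_all q : zero_last_row d q = pad (sharp q).
Proof.
apply: functional_extensionality => J; apply: functional_extensionality => j.
rewrite /zero_last_row /pad /sharp ltn_ord andbT; case: insubP => [B _ HB | HJ].
  have -> : J = wid B by apply: val_inj; rewrite /= HB.
  by rewrite wid_eq_max.
suff -> : J = ord_max by rewrite eqxx.
by apply: val_inj => /=; apply/eqP; rewrite eqn_leq -ltnS ltn_ord leqNgt.
Qed.

Lemma last_row_invariant (F : Cfg M.+1 d -> C) :
  (forall q i, F (upd q ord_max i 0) = F q) -> forall q, F (pad (sharp q)) = F q.
Proof.
move=> HF q; rewrite -zero_last_row_all.
suff : forall k, (k <= d)%N -> F (zero_last_row k q) = F q by apply.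
elim=> [|k IH] Hk; first by rewrite zero_last_row0.
by rewrite (zero_last_rowS k q Hk) HF IH // ltnW.
Qed.

Definition lift_dir (e : dir M d) : dir M.+1 d :=
  if e is Some (A, i) then Some (wid A, i) else None.

Lemma dir_fun_pad (F : CFun M.+1 d) e qs t :
  dir_fun (fun qs t => F (pad qs) t) e qs t = dir_fun F (lift_dir e) (pad qs) t.
Proof.
case: e => [[A i]|] //=; apply: functional_extensionality => s.
by rewrite pad_upd.
Qed.

Lemma dir_pt_pad e qs t : dir_pt (lift_dir e) (pad qs) t = dir_pt e qs t.
Proof. by case: e => [[A i]|] //=; rewrite /pad valK. Qed.

Lemma smoothC_pad (F : CFun M.+1 d) : smoothC F -> smoothC (fun qs t => F (pad qs) t).
Proof.
move=> HF ds.
have -> : fold_right (fun e' G => dir_deriv G e') (fun qs t => F (pad qs) t) ds =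
    fun qs t => fold_right (fun e' G => dir_deriv G e') F (map lift_dir ds) (pad qs) t.
  elim: ds => [|e ds IH] //=; rewrite IH.
  apply: functional_extensionality => qs; apply: functional_extensionality => t.
  by rewrite !dir_derivE dir_fun_pad dir_pt_pad.
by move=> e qs t; rewrite dir_exE dir_fun_pad -dir_pt_pad -dir_exE; apply: HF.
Qed.

End Coordinates.

Lemma expi_mult_opp th : Cmult (expi th) (expi (- th)) = RtoC 1.
Proof.
rewrite /expi cos_neg sin_neg /Cmult /RtoC /=; f_equal; last by ring.
by rewrite -(sin2_cos2 th) /Rsqr; ring.
Qed.

Lemma Cmult_expi_eq0 a th : Cmult a (expi th) = RtoC 0 <-> a = RtoC 0.
Proof.
split=> [H | ->]; last exact: Cmult_0_l.
by rewrite -[a]Cmult_1_r -(expi_mult_opp th) Cmult_assoc H Cmult_0_l.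
Qed.

Lemma Cmult_expi_oppK a th : Cmult (Cmult a (expi (- th))) (expi th) = a.
Proof.
by have := expi_mult_opp (- th); rewrite Ropp_involutive -Cmult_assoc => ->; rewrite Cmult_1_r.
Qed.

(* [(-i h d/dx - W') (b e^{iW/h}) = (-i h b') e^{iW/h}], with [D = b'], [w = W'] and
   [th = W/h]. *)
Lemma shifted_momentum_phase (D b : C) (w h th : R) : h <> 0 ->
  Cminus (Cmult (Copp (Cmult Ci (RtoC h)))
                (Cmult (Cplus D (Cmult b (Cmult Ci (RtoC (w / h))))) (expi th)))
         (Cmult (RtoC w) (Cmult b (expi th))) =
  Cmult (Cmult (Copp (Cmult Ci (RtoC h))) D) (expi th).
Proof.
move=> Hh; case: D b => [D1 D2] [b1 b2].
by rewrite /Cminus /Cplus /Cmult /Copp /RtoC /Ci /expi /=; f_equal; field.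
Qed.

(* The time analogue:
   [i h d/dt (b e^{iW/h}) - (X e^{iW/h} - W' b e^{iW/h}) = (i h b' - X) e^{iW/h}]. *)
Lemma energy_phase (D b X : C) (w h th : R) : h <> 0 ->
  Cminus (Cmult (Cmult Ci (RtoC h))
                (Cmult (Cplus D (Cmult b (Cmult Ci (RtoC (w / h))))) (expi th)))
         (Cminus (Cmult X (expi th)) (Cmult (RtoC w) (Cmult b (expi th)))) =
  Cmult (Cminus (Cmult (Cmult Ci (RtoC h)) D) X) (expi th).
Proof.
move=> Hh; case: D b X => [D1 D2] [b1 b2] [X1 X2].
by rewrite /Cminus /Cplus /Cmult /Copp /RtoC /Ci /expi /=; f_equal; field.
Qed.

Section Gauge.
Variables (M d : nat) (hbar : R) (W : Cfg M.+1 d -> R -> R).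
Hypothesis hbar_neq0 : hbar <> 0.
Hypothesis smooth_W : smoothR W.
Implicit Types (h g : CFun M d) (q : Cfg M.+1 d) (A : 'I_M) (i : 'I_d) (t : R).

Definition gauge (h : CFun M d) : CFun M.+1 d :=
  fun q t => Cmult (lift_sharp h q t) (expi (W q t / hbar)).

Lemma dir_deriv_gauge {h e q t} : dir_ex (lift_sharp h) e q t ->
  dir_deriv (gauge h) e q t =
  Cmult (Cplus (dir_deriv (lift_sharp h) e q t)
               (Cmult (h (sharp q) t)
                      (Cmult Ci (RtoC (Derive (dir_funR W e q t) (dir_pt e q t) / hbar)))))
        (expi (W q t / hbar)).
Proof.
by move=> Hu; rewrite dir_derivE; apply: is_Cderive_unique (is_Cderive_phase hbar_neq0 smooth_W Hu).
Qed.

Lemma dir_fun_lift_sharp_wid h A i q t :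
  dir_fun (lift_sharp h) (Some (wid A, i)) q t = dir_fun h (Some (A, i)) (sharp q) t.
Proof. by apply: functional_extensionality => s; rewrite /= /lift_sharp sharp_upd_wid. Qed.

Lemma dq_gauge_wid h A i q t : dir_ex h (Some (A, i)) (sharp q) t ->
  dq (gauge h) (wid A) i q t =
  Cmult (Cplus (dq h A i (sharp q) t)
               (Cmult (h (sharp q) t) (Cmult Ci (RtoC (dqR W (wid A) i q t / hbar)))))
        (expi (W q t / hbar)).
Proof.
move=> Hh.
have Hu : dir_ex (lift_sharp h) (Some (wid A, i)) q t.
  by rewrite dir_exE dir_fun_lift_sharp_wid -dir_exE.
have := dir_deriv_gauge Hu.
by rewrite [dir_deriv (lift_sharp h) _ _ _]dir_derivE dir_fun_lift_sharp_wid -dir_derivE.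
Qed.

Lemma dq_gauge_max h i q t :
  dq (gauge h) ord_max i q t =
  Cmult (Cplus (RtoC 0)
               (Cmult (h (sharp q) t) (Cmult Ci (RtoC (dqR W ord_max i q t / hbar)))))
        (expi (W q t / hbar)).
Proof.
have const : is_Cderive (dir_fun (lift_sharp h) (Some (ord_max, i)) q t) (q ord_max i) (RtoC 0).
  apply: is_Cderive_ext (is_Cderive_const (h (sharp q) t) _) => s.
  by rewrite /= /lift_sharp sharp_upd_max.
have := dir_deriv_gauge (e := Some (ord_max, i)) (is_Cderive_ex const).
by rewrite [dir_deriv (lift_sharp h) _ _ _]dir_derivE (is_Cderive_unique const).
Qed.

Lemma dt_gauge h q t : dir_ex h None (sharp q) t ->
  dt (gauge h) q t =
  Cmult (Cplus (dt h (sharp q) t)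
               (Cmult (h (sharp q) t) (Cmult Ci (RtoC (dtR W q t / hbar)))))
        (expi (W q t / hbar)).
Proof. exact: (dir_deriv_gauge (e := None)). Qed.

Lemma p_shift_gauge h A i : (forall qs t, dir_ex h (Some (A, i)) qs t) ->
  p_shift hbar W A i (gauge h) = gauge (p_std hbar A i h).
Proof.
move=> Hh; apply: functional_extensionality => q; apply: functional_extensionality => t.
by rewrite /p_shift dq_gauge_wid // shifted_momentum_phase.
Qed.

Lemma apply_word_gauge (w : word M d) g :
  (forall f, In (Mul f) w -> smoothC f) -> smoothC g ->
  smoothC (apply_word (fun f => f) (p_std hbar) w g) /\
  apply_word (@lift_sharp M d) (p_shift hbar W) w (gauge g) =
  gauge (apply_word (fun f => f) (p_std hbar) w g).
Proof.
move=> Hw Hg; elim: w Hw => [|[f|A i] w IH] Hw //=.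
all: have [Hsm ->] := IH (fun f' Hf' => Hw f' (or_intror Hf')).
- split; first by apply: smoothC_mult => //; apply: Hw; left.
  apply: functional_extensionality => q; apply: functional_extensionality => t.
  by rewrite /gauge /lift_sharp Cmult_assoc.
- split; first exact: smoothC_mult (smoothC_const _) (smoothC_deriv (Some (A, i)) Hsm).
  by apply: p_shift_gauge => qs t; apply: (Hsm nil).
Qed.

Lemma apply_op_gauge (H : oper M d) g : op_smooth H -> smoothC g -> forall q t,
  apply_op (@lift_sharp M d) (p_shift hbar W) H (gauge g) q t =
  Cmult (apply_op (fun f => f) (p_std hbar) H g (sharp q) t) (expi (W q t / hbar)).
Proof.
move=> HH Hg q t; rewrite /apply_op; elim: H HH => [|w H IH] HH /=; first by ring.
have [_ ->] := apply_word_gauge w (HH w (or_introl erefl)) Hg.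
by rewrite IH => [|w' Hw']; [rewrite /gauge /lift_sharp; ring | apply: HH; right].
Qed.

End Gauge.

Section Equivalence.
Variables (M d : nat) (hbar : R) (W : Cfg M.+1 d -> R -> R).
Hypothesis hbar_neq0 : hbar <> 0.
Hypothesis smooth_W : smoothR W.
Variables (K : Type) (Hs : oper M d) (gam : K -> oper M d).
Hypothesis smooth_Hs : op_smooth Hs.
Hypothesis smooth_gam : forall a, op_smooth (gam a).

Lemma QM_L_gauge h : smoothC h -> QM_L hbar Hs gam W (gauge hbar W h) <-> QM_sharp hbar Hs gam h.
Proof.
move=> Hh.
have evolution q t :
    Cmult (Cmult Ci (RtoC hbar)) (dt (gauge hbar W h) q t) =
      Cminus (apply_op (@lift_sharp M d) (p_shift hbar W) Hs (gauge hbar W h) q t)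
             (Cmult (RtoC (dtR W q t)) (gauge hbar W h q t)) <->
    Cmult (Cmult Ci (RtoC hbar)) (dt h (sharp q) t) =
      apply_op (fun f => f) (p_std hbar) Hs h (sharp q) t.
  rewrite dt_gauge ?apply_op_gauge //; last exact: (Hh nil None).
  by rewrite Ceq_minus energy_phase // Cmult_expi_eq0 -Ceq_minus.
have constraint a q t :
    apply_op (@lift_sharp M d) (p_shift hbar W) (gam a) (gauge hbar W h) q t = RtoC 0 <->
    apply_op (fun f => f) (p_std hbar) (gam a) h (sharp q) t = RtoC 0.
  by rewrite apply_op_gauge // Cmult_expi_eq0.
split=> [[evolL [_ constrL]] | [evolS constrS]].
  by split=> [qs t | a qs t]; rewrite -(sharp_pad qs);
    [apply/evolution/evolL | apply/constraint/constrL].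
split; [|split] => [q t | i q t | a q t]; first exact/evolution/evolS.
  by rewrite dq_gauge_max // /gauge /lift_sharp shifted_momentum_phase //; ring.
exact/constraint/constrS.
Qed.

End Equivalence.

Section LastRowConstraint.
Variables (M d : nat) (hbar : R) (W : Cfg M.+1 d -> R -> R).
Hypothesis hbar_neq0 : hbar <> 0.
Hypothesis smooth_W : smoothR W.
Variable psi : CFun M.+1 d.
Hypothesis smooth_psi : smoothC psi.
Hypothesis last_row_constraint : forall (i : 'I_d) q t,
  Cminus (Cmult (Copp (Cmult Ci (RtoC hbar))) (dq psi ord_max i q t))
         (Cmult (RtoC (dqR W ord_max i q t)) (psi q t)) = RtoC 0.

Definition unphased : CFun M.+1 d := fun q t => Cmult (psi q t) (expi (W q t / - hbar)).

Lemma smoothC_unphased : smoothC unphased.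
Proof.
apply: smoothC_mult smooth_psi (smoothC_expi smooth_W _).
by move/Ropp_eq_0_compat; rewrite Ropp_involutive.
Qed.

Lemma psi_unphased : psi = fun q t => Cmult (unphased q t) (expi (W q t / hbar)).
Proof.
apply: functional_extensionality => q; apply: functional_extensionality => t.
by rewrite /unphased Rdiv_opp_r Cmult_expi_oppK.
Qed.

Lemma dq_unphased_max i q t : dq unphased ord_max i q t = RtoC 0.
Proof.
have := last_row_constraint i q t; rewrite psi_unphased.
have := is_Cderive_phase (e := Some (ord_max, i)) hbar_neq0 smooth_W
  (smoothC_unphased nil (Some (ord_max, i)) q t).
move/is_Cderive_unique; rewrite -dir_derivE /= => ->.
rewrite shifted_momentum_phase // Cmult_expi_eq0 => H.
have -> : dq unphased ord_max i q t = Cmult (Cinv (Copp (Cmult Ci (RtoC hbar))))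
    (Cmult (Copp (Cmult Ci (RtoC hbar))) (dq unphased ord_max i q t)).
  by field; split; [move/RtoC_inj | exact: Ci_nz].
by rewrite H Cmult_0_r.
Qed.

Lemma unphased_last_row_invariant q i t : unphased (upd q ord_max i 0) t = unphased q t.
Proof.
have flat s : is_Cderive (fun s' => unphased (upd q ord_max i s') t) s (RtoC 0).
  have := dir_ex_is_Cderive (smoothC_unphased nil (Some (ord_max, i)) (upd q ord_max i s) t).
  rewrite /= upd_same dq_unphased_max.
  by apply: is_Cderive_ext => s'; rewrite upd_upd.
by rewrite (is_Cderive_0_const flat 0 (q ord_max i)) upd_id.
Qed.

Lemma psi_gauge : psi = gauge hbar W (fun qs t => unphased (pad qs) t).
Proof.
rewrite {1}psi_unphased; apply: functional_extensionality => q.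
apply: functional_extensionality => t; rewrite /gauge /lift_sharp.
rewrite (last_row_invariant (fun q => unphased q t)) // => q' i.
exact: unphased_last_row_invariant.
Qed.

End LastRowConstraint.

Theorem proposition1 (M d : nat) (HM : (1 <= M)%N) (Hd : (1 <= d)%N)
  (hbar : R) (Hhbar : 0 < hbar)
  (K : Type) (Hs : oper M d) (gam : K -> oper M d)
  (W : Cfg M.+1 d -> R -> R) :
  op_smooth Hs -> (forall a : K, op_smooth (gam a)) -> smoothR W ->
  forall psi : CFun M.+1 d, smoothC psi ->
  (QM_L hbar Hs gam W psi <->
   exists psis : CFun M d,
     smoothC psis /\ QM_sharp hbar Hs gam psis /\
     forall (q : Cfg M.+1 d) (t : R),
       psi q t = Cmult (psis (sharp q) t) (expi (W q t / hbar))).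
Proof.
move=> smooth_Hs smooth_gam smooth_W psi smooth_psi.
have hbar_neq0 : hbar <> 0 by lra.
have gauge_iff := QM_L_gauge hbar_neq0 smooth_W gam smooth_Hs smooth_gam.
split=> [QM | [psis [smooth_psis [QM psi_eq]]]].
- have psiE := psi_gauge hbar_neq0 smooth_W smooth_psi QM.2.1.
  have smooth_psis := smoothC_pad (smoothC_unphased hbar_neq0 smooth_W smooth_psi).
  exists (fun qs t => unphased hbar W psi (pad qs) t).
  split=> //; split; last by rewrite {1}psiE.
  by apply/(gauge_iff _ smooth_psis); rewrite -psiE.
- have -> : psi = gauge hbar W psis.
    by apply: functional_extensionality => q; apply: functional_extensionality => t.
  exact/gauge_iff.
Qed.
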